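(* Let $\bm F\in\mathbb{C}^{N\times N}$ be an invertible Hermitian matrix with spectral decomposition $\bm F=\sum_{i=1}^N\lambda_i\bm v_i\bm v_i^\dagger$ ($\{\bm v_i\}$ orthonormal), spectral norm $s=\|\bm F\|_*=\max_i|\lambda_i|$ and condition number $\kappa$, so that $s/\kappa\le|\lambda_i|\le s$ for all $i$. Let $\gamma>0$, $0<\epsilon\le 1$, and $h(\lambda)=\frac{\sqrt{\gamma}\lambda}{\lambda^2+\gamma}$. Let $\bm y=\sum_i\beta_i\bm v_i\in\mathbb{C}^N$ be a unit vector, and let $\overline{\lambda_1},\dots,\overline{\lambda_N}\in\mathbb{R}$ satisfy $|\overline{\lambda_i}-\lambda_i|\le \frac{s}{4\kappa}\epsilon$ for all $i$. Define $$\bm w=\frac{\sum_i\beta_i h(\overline{\lambda_i})\bm v_i}{\big\|\sum_i\beta_i h(\overline{\lambda_i})\bm v_i\big\|},\qquad \bm w^*=\frac{\sum_i\beta_i h(\lambda_i)\bm v_i}{\big\|\sum_i\beta_i h(\lambda_i)\bm v_i\big\|}.$$ Then both are well defined, $\bm w^*$ is the unit vector proportional to $(\bm F^\dagger\bm F+\gamma\bm I_N)^{-1}\bm F^\dagger\bm y$, and $\|\bm w-\bm w^*\|\le\epsilon$.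
   Context: This is the correctness part of the paper's main theorem (Theorem 2): $\bm w$ is the (normalized) output of the algorithm after post-selection, using eigenvalue estimates $\overline{\lambda_i}$, and $\bm w^*$ is the normalized optimal fit parameter of the regularized least squares problem $\min_{\bm w}\|\bm F\bm w-\bm y\|^2+\gamma\|\bm w\|^2$. Norms are Euclidean. *)

(* Complex numbers: an arbitrary numClosedFieldType C
   (e.g. algC); conjugate transpose is mathcomp's  M ^t*  (spectral.v). *)
From HB Require Import structures.
From mathcomp Require Import all_boot all_order all_algebra.
Set Implicit Arguments. Unset Strict Implicit. Unset Printing Implicit Defensive.
Import Order.TTheory GRing.Theory Num.Theory.
Local Open Scope ring_scope.

Definition vnorm (C : numClosedFieldType) (N : nat) (x : 'cV[C]_N) : C :=
  sqrtC (\sum_(i < N) `|x i 0| ^+ 2).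

Definition specnorm (C : numClosedFieldType) (N : nat) (lam : 'I_N -> C) : C :=
  \big[Order.max/0]_(i < N) `|lam i|.

(* condition number kappa = ||F|| * ||F^-1|| = (max_i |lambda_i|) * (max_i |lambda_i|^-1) *)
Definition condnum (C : numClosedFieldType) (N : nat) (lam : 'I_N -> C) : C :=
  specnorm lam * specnorm (fun i => (lam i)^-1).

Definition hfun (C : numClosedFieldType) (gamma lam : C) : C :=
  sqrtC gamma * lam / (lam ^+ 2 + gamma).

(* Work in the eigenbasis V of the Hermitian matrix F = V diag(lam) V^*; since V
   is unitary, norms can be computed on coordinate vectors.  The proof has two
   independent parts.
   - Exact solution: in the eigenbasis, (F^* F + gamma I)^-1 F^* y has
     coordinates beta_i lam_i / (lam_i^2 + gamma), i.e. it is sqrt(gamma)^-1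
     times the filtered vector sum_i beta_i h(lam_i) v_i (ridge_direction);
     normalizing forgets this positive factor.
   - Perturbation: writing m = 1 - eps/4, the tolerance on the estimates gives
     a relative eigenvalue error at most eps/4, hence every ratio
     t_i = h(lamb_i)/h(lam_i) lies in the band [m, 1/m] (hfun_ratio_band).
     Scaling each coordinate by a factor in such a band moves the normalized
     vector by at most eps as soon as 1 - eps <= m^2 and m^-2 <= 1 + eps
     (normalized_perturbation). *)
From HB Require Import structures.
From mathcomp Require Import all_boot all_order all_algebra.
From mathcomp Require Import ring.
Import Order.TTheory GRing.Theory Num.Theory.
Local Open Scope ring_scope.
Local Open Scope sesquilinear_scope.
Set Implicit Arguments. Unset Strict Implicit.

Section CoordinateNorms.
Variable C : numClosedFieldType.

Definition coords N (c : 'I_N -> C) : 'cV[C]_N := \col_i c i.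

Definition sumsq N (c : 'I_N -> C) : C := \sum_i `|c i| ^+ 2.

Lemma sumsq_ge0 N (c : 'I_N -> C) : 0 <= sumsq c.
Proof. by apply: sumr_ge0 => i _; rewrite exprn_ge0. Qed.

Lemma vnorm_coords N (c : 'I_N -> C) : vnorm (coords c) = sqrtC (sumsq c).
Proof. by rewrite /vnorm; congr sqrtC; apply: eq_bigr => i _; rewrite mxE. Qed.

Lemma vnormE N (x : 'cV[C]_N) : vnorm x = sqrtC ((x ^t* *m x) 0 0).
Proof.
by rewrite /vnorm mxE; congr sqrtC; apply: eq_bigr => i _; rewrite !mxE normCK mulrC.
Qed.

Lemma vnormZ N (k : C) (x : 'cV[C]_N) : vnorm (k *: x) = `|k| * vnorm x.
Proof.
rewrite /vnorm; under eq_bigr do rewrite mxE normrM exprMn.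
rewrite -mulr_sumr sqrtCM ?nnegrE ?exprn_ge0 ?sqrCK //.
by apply: sumr_ge0 => i _; rewrite exprn_ge0.
Qed.

Definition normalize N (x : 'cV[C]_N) : 'cV[C]_N := (vnorm x)^-1 *: x.

Lemma vnorm_unitary N (V : 'M[C]_N) (x : 'cV[C]_N) :
  V \is unitarymx -> vnorm (V *m x) = vnorm x.
Proof.
move/unitarymxP/mulmx1C => VV1.
by rewrite !vnormE trmx_mul map_mxM mulmxA -(mulmxA _ (V ^t*)) VV1 mulmx1.
Qed.

Lemma normalize_unitary N (V : 'M[C]_N) (x : 'cV[C]_N) :
  V \is unitarymx -> normalize (V *m x) = V *m normalize x.
Proof. by move=> V_unitary; rewrite /normalize vnorm_unitary // scalemxAr. Qed.

Lemma normalizeZ N (c : C) (x : 'cV[C]_N) :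
  0 < c -> normalize (c *: x) = normalize x.
Proof.
move=> c_gt0; rewrite /normalize vnormZ gtr0_norm // scalerA invfM.
by rewrite mulrAC mulVf ?gt_eqF // mul1r.
Qed.

Lemma sum_colsE N (V : 'M[C]_N) (c : 'I_N -> C) :
  \sum_i c i *: col i V = V *m coords c.
Proof.
apply/matrixP => j k; rewrite !mxE summxE; apply: eq_bigr => i _.
by rewrite !mxE mulrC.
Qed.

Lemma sumsq_mul_gt0 N (c d : 'I_N -> C) :
  sumsq c != 0 -> (forall i, d i != 0) -> 0 < sumsq (fun i => c i * d i).
Proof.
move=> c_neq0 d_neq0; rewrite lt0r sumsq_ge0 andbT.
apply: contra c_neq0 => /eqP/psumr_eq0P cd0; apply/eqP/big1 => i _.
have /eqP := cd0 (fun j _ => exprn_ge0 2 (normr_ge0 _)) i isT.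
rewrite normrM exprMn mulf_eq0 => /orP[/eqP // | ].
by rewrite expf_eq0 /= normr_eq0 (negbTE (d_neq0 i)).
Qed.

End CoordinateNorms.

Section UnitaryConjugation.
Variables (C : numClosedFieldType) (N : nat) (V : 'M[C]_N).
Hypothesis V_unitary : V \is unitarymx.

Let VtV : V ^t* *m V = 1%:M.
Proof. exact/mulmx1C/unitarymxP. Qed.

Definition diag_of (d : 'I_N -> C) : 'M[C]_N := diag_mx (\row_i d i).

Lemma spectral_sumE (lam : 'I_N -> C) :
  \sum_(i < N) lam i *: (col i V *m (col i V) ^t*) = V *m diag_of lam *m V ^t*.
Proof.
apply/matrixP => j k; rewrite mul_mx_diag summxE !mxE; apply: eq_bigr => i _.
by rewrite !mxE big_ord1 !mxE mulrCA mulrA.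
Qed.

Lemma conj_diag_mul (d e : 'I_N -> C) :
  (V *m diag_of d *m V ^t*) *m (V *m diag_of e *m V ^t*) =
  V *m diag_of (fun i => d i * e i) *m V ^t*.
Proof.
rewrite !mulmxA -(mulmxA _ (V ^t*)) VtV mulmx1 -(mulmxA V) mulmx_diag.
by congr (V *m diag_mx _ *m _); apply/matrixP => i j; rewrite !mxE.
Qed.

Lemma conj_diag_coords (d c : 'I_N -> C) :
  (V *m diag_of d *m V ^t*) *m (V *m coords c) = V *m coords (fun i => d i * c i).
Proof.
rewrite !mulmxA -(mulmxA _ (V ^t*)) VtV mulmx1 -mulmxA; congr (V *m _).
by apply/matrixP => i k; rewrite mul_diag_mx !mxE.
Qed.

Lemma scalar_conj (g : C) : g%:M = V *m diag_of (fun=> g) *m V ^t*.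
Proof.
have -> : diag_of (fun=> g) = g%:M by apply/matrixP => i j; rewrite !mxE.
by rewrite mul_mx_scalar -scalemxAl (unitarymxP V_unitary) scalemx1.
Qed.

Lemma conj_diag_unitP (d : 'I_N -> C) :
  reflect (forall i, d i != 0) (V *m diag_of d *m V ^t* \in unitmx).
Proof.
have Vt_unit : V ^t* \in unitmx by apply: unitarymx_unit; rewrite trmxC_unitary.
rewrite !unitmx_mul unitarymx_unit // Vt_unit andbT /= unitmxE det_diag unitfE.
apply: (iffP (prodf_neq0 _ _)) => d_neq0 i; last by rewrite mxE.
by have := d_neq0 i isT; rewrite mxE.
Qed.

Lemma ridge_solution (F : 'M[C]_N) (lam beta : 'I_N -> C) (g : C) :
  F = V *m diag_of lam *m V ^t* -> F ^t* = F ->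
  (forall i, lam i ^+ 2 + g != 0) ->
  invmx (F ^t* *m F + g%:M) *m F ^t* *m (V *m coords beta) =
  V *m coords (fun i => beta i * lam i / (lam i ^+ 2 + g)).
Proof.
move=> F_spec F_herm reg_neq0.
set M := F ^t* *m F + g%:M.
have M_spec : M = V *m diag_of (fun i => lam i ^+ 2 + g) *m V ^t*.
  rewrite /M F_herm F_spec conj_diag_mul scalar_conj -mulmxDl -mulmxDr.
  by congr (V *m _ *m _); apply/matrixP => i j; rewrite !mxE -mulrnDl expr2.
have M_unit : M \in unitmx by rewrite M_spec; apply/conj_diag_unitP.
set c := fun i => _.
have Fy : F ^t* *m (V *m coords beta) = M *m (V *m coords c).
  rewrite M_spec F_herm {1}F_spec !conj_diag_coords; congr (V *m _).
  by apply/matrixP => i k; rewrite !mxE /c; field.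
by rewrite -mulmxA Fy mulKmx.
Qed.

End UnitaryConjugation.

Section SpectralNorm.
Variable C : numClosedFieldType.

Lemma max_nonneg (x y : C) : 0 <= x -> 0 <= y -> 0 <= Order.max x y.
Proof.
by move=> x0 y0; rewrite comparable_maxEge ?real_comparable ?ger0_real //; case: ifP.
Qed.

(* Every term of a finite max of nonnegative numbers is bounded by it; the
   order on C is only partial, so the maxima stay comparable by nonnegativity. *)
Lemma le_bigmax_nonneg (I : eqType) (r : seq I) (f : I -> C) i :
  (forall j, 0 <= f j) -> i \in r -> f i <= \big[Order.max/0]_(j <- r) f j.
Proof.
move=> f_ge0; have big_ge0 (s : seq I) : 0 <= \big[Order.max/0]_(j <- s) f j.
  by elim/big_ind: _ => //; apply: max_nonneg.
elim: r => // x r IH; rewrite in_cons big_cons.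
rewrite comparable_le_max ?real_comparable ?ger0_real ?big_ge0 //.
by case/orP => [/eqP -> | /IH ->]; rewrite ?lexx ?orbT.
Qed.

Lemma specnorm_ge (N : nat) (lam : 'I_N -> C) i : `|lam i| <= specnorm lam.
Proof.
exact: (@le_bigmax_nonneg _ (index_enum 'I_N) (fun j => `|lam j|) i
  (fun j => normr_ge0 _) (mem_index_enum i)).
Qed.

(* The tolerance s / (4 kappa) used in the theorem is at most |lam_i| / 4:
   indeed s / kappa = 1 / max_j |lam_j|^-1 <= |lam_i|. *)
Lemma tolerance_le (N : nat) (lam : 'I_N -> C) i :
  lam i != 0 -> specnorm lam / (4%:R * condnum lam) <= `|lam i| / 4.
Proof.
move=> lam_neq0; rewrite /condnum.
set s := specnorm lam; set s' := specnorm (fun j => (lam j)^-1).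
have li_gt0 : 0 < `|lam i| by rewrite normr_gt0.
have s_gt0 : 0 < s by apply: lt_le_trans li_gt0 (specnorm_ge _ _).
have inv_le : `|(lam i)^-1| <= s' := specnorm_ge (fun j => (lam j)^-1) i.
have s'_gt0 : 0 < s' by apply: lt_le_trans inv_le; rewrite normr_gt0 invr_eq0.
have -> : s / (4%:R * (s * s')) = s'^-1 / 4 by field; rewrite !gt_eqF.
rewrite ler_pM2r ?invr_gt0 ?ltr0n // -[X in _ <= X]invrK.
by rewrite lef_pV2 ?posrE ?invr_gt0 // -normfV.
Qed.

End SpectralNorm.

Section MultiplicativeBands.
Variable C : numClosedFieldType.

Definition in_band (m x : C) : bool := m <= x <= m^-1.

Lemma in_band_ge0 (m x : C) : 0 < m -> in_band m x -> 0 <= x.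
Proof. by move=> m_gt0 /andP[mx _]; apply: le_trans mx; apply: ltW. Qed.

Lemma rel_error_band (d q : C) : 0 <= d < 1 -> q \is Num.real ->
  `|q - 1| <= d -> in_band (1 - d) q.
Proof.
case/andP=> d_ge0 d_lt1 q_real; rewrite real_ler_distl ?rpredB ?rpred1 //.
case/andP=> q_lo q_hi; apply/andP; split=> //.
rewrite -[_^-1]mulr1 ler_pdivlMl ?subr_gt0 //; apply: le_trans (ler_wpM2l _ q_hi) _.
  by rewrite subr_ge0 (ltW d_lt1).
have -> : (1 - d) * (1 + d) = 1 - d ^+ 2 by ring.
by rewrite gerBl exprn_ge0.
Qed.

Lemma ridge_gain_band (m q L g : C) : 0 < m -> 0 <= L -> 0 < g ->
  in_band m q -> in_band m (q * (L + g) / (q ^+ 2 * L + g)).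
Proof.
move=> m_gt0 L_ge0 g_gt0 qb; have q_ge0 := in_band_ge0 m_gt0 qb.
case/andP: qb => q_lo q_hi.
have mq_le1 : 0 <= 1 - m * q by rewrite subr_ge0 -ler_pdivlMl // mulr1.
have qm_ge0 : 0 <= q - m by rewrite subr_ge0.
have g_ge0 := ltW g_gt0.
have den_gt0 : 0 < q ^+ 2 * L + g by rewrite ltr_wpDl ?mulr_ge0 ?exprn_ge0.
apply/andP; split.
  rewrite ler_pdivlMr // -subr_ge0.
  have -> : q * (L + g) - m * (q ^+ 2 * L + g) = L * q * (1 - m * q) + g * (q - m)
    by ring.
  by rewrite addr_ge0 ?mulr_ge0.
rewrite ler_pdivrMr // [X in _ <= X]mulrC ler_pdivlMr // -subr_ge0.
have -> : q ^+ 2 * L + g - q * (L + g) * m = L * q * (q - m) + g * (1 - m * q)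
  by ring.
by rewrite addr_ge0 ?mulr_ge0.
Qed.

Lemma band_mul_dist (m e s t : C) : 0 < m ->
  1 - e <= m ^+ 2 -> m^-1 ^+ 2 <= 1 + e ->
  in_band m s -> in_band m t -> `|t * s - 1| <= e.
Proof.
move=> m_gt0 lo hi sb tb.
have [s_ge0 t_ge0] := (in_band_ge0 m_gt0 sb, in_band_ge0 m_gt0 tb).
case/andP: sb => s_lo s_hi; case/andP: tb => t_lo t_hi.
rewrite real_ler_distl ?rpredB ?realM ?ger0_real //; apply/andP; split.
  by apply: le_trans lo _; rewrite expr2 ler_pM ?(ltW m_gt0).
by apply: le_trans hi; rewrite expr2 ler_pM ?invr_ge0 ?(ltW m_gt0).
Qed.

End MultiplicativeBands.

Section NormalizedPerturbation.
Variables (C : numClosedFieldType) (N : nat).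

Lemma sumsq_band (m : C) (b t : 'I_N -> C) : 0 < m ->
  (forall i, in_band m (t i)) ->
  m ^+ 2 * sumsq b <= sumsq (fun i => b i * t i) <= m^-1 ^+ 2 * sumsq b.
Proof.
move=> m_gt0 tb; rewrite /sumsq !mulr_sumr.
have t_ge0 i := in_band_ge0 m_gt0 (tb i).
have sq_t i : `|b i * t i| ^+ 2 = `|b i| ^+ 2 * t i ^+ 2.
  by rewrite normrM exprMn [`|t i|]ger0_norm.
apply/andP; split; apply: ler_sum => i _; rewrite sq_t [_ * `|b i| ^+ 2]mulrC;
  apply: ler_wpM2l; rewrite ?exprn_ge0 //; case/andP: (tb i) => lo hi.
  by rewrite ler_pXn2r ?nnegrE ?(ltW m_gt0).
by rewrite ler_pXn2r ?nnegrE ?invr_ge0 ?(ltW m_gt0).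
Qed.

Lemma sumsq_band_gt0 (m : C) (b t : 'I_N -> C) : 0 < m ->
  (forall i, in_band m (t i)) -> 0 < sumsq b -> 0 < sumsq (fun i => b i * t i).
Proof.
move=> m_gt0 tb b_gt0; have /andP[lo _] := sumsq_band b m_gt0 tb.
by apply: lt_le_trans lo; rewrite mulr_gt0 ?exprn_gt0.
Qed.

Lemma sqrt_ratio_band (m A B : C) : 0 < m -> 0 < B ->
  m ^+ 2 * B <= A <= m^-1 ^+ 2 * B -> in_band m (sqrtC B / sqrtC A).
Proof.
move=> m_gt0 B_gt0 /andP[A_lo A_hi].
have A_gt0 : 0 < A by apply: lt_le_trans A_lo; rewrite mulr_gt0 ?exprn_gt0.
have m_ge0 := ltW m_gt0; have A_ge0 := ltW A_gt0; have B_ge0 := ltW B_gt0.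
have sqrt_mul (k : C) : 0 <= k -> sqrtC (k ^+ 2 * B) = k * sqrtC B.
  by move=> k_ge0; rewrite sqrtCM ?nnegrE ?exprn_ge0 // sqrCK.
have sA_lo : m * sqrtC B <= sqrtC A.
  by rewrite -sqrt_mul // ler_sqrtC // nnegrE mulr_ge0 ?exprn_ge0.
have sA_hi : sqrtC A <= m^-1 * sqrtC B.
  by rewrite -sqrt_mul ?invr_ge0 // ler_sqrtC // nnegrE mulr_ge0 ?exprn_ge0 ?invr_ge0.
have sA_gt0 : 0 < sqrtC A by rewrite sqrtC_gt0.
apply/andP; split.
  by rewrite ler_pdivlMr // -ler_pdivlMl // mulrC.
by rewrite ler_pdivrMr // mulrC ler_pdivlMr // mulrC.
Qed.

Lemma normalized_perturbation (m e : C) (b t : 'I_N -> C) :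
  0 < m -> 0 <= e -> 1 - e <= m ^+ 2 -> m^-1 ^+ 2 <= 1 + e ->
  0 < sumsq b -> (forall i, in_band m (t i)) ->
  vnorm (normalize (coords (fun i => b i * t i)) - normalize (coords b)) <= e.
Proof.
move=> m_gt0 e_ge0 lo hi B_gt0 tb; rewrite /normalize !vnorm_coords.
set a := fun i => b i * t i.
set A := sumsq a; set B := sumsq b; set r := sqrtC B / sqrtC A.
have A_gt0 : 0 < A := sumsq_band_gt0 m_gt0 tb B_gt0.
have [sA_gt0 sB_gt0] : 0 < sqrtC A /\ 0 < sqrtC B by rewrite !sqrtC_gt0.
have r_band : in_band m r by apply: sqrt_ratio_band (sumsq_band b m_gt0 tb).
have -> : (sqrtC A)^-1 *: coords a - (sqrtC B)^-1 *: coords b =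
          coords (fun i => b i * (t i * r - 1) / sqrtC B).
  by apply/matrixP => i k; rewrite !mxE /a /r; field; rewrite !gt_eqF.
rewrite vnorm_coords -(sqrCK e_ge0) ler_sqrtC ?nnegrE ?sumsq_ge0 ?exprn_ge0 //.
apply: le_trans (_ : _ <= \sum_i `|b i| ^+ 2 * (e ^+ 2 / B)) _; last first.
  by rewrite -mulr_suml mulrCA divff ?gt_eqF // mulr1.
apply: ler_sum => i _; rewrite !normrM !exprMn -mulrA.
apply: (ler_wpM2l (exprn_ge0 2 (normr_ge0 (b i)))).
rewrite normfV (ger0_norm (ltW sB_gt0)) exprVn sqrtCK ler_pM2r ?invr_gt0 //.
rewrite ler_pXn2r ?nnegrE //.
exact: band_mul_dist m_gt0 lo hi r_band (tb i).
Qed.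

End NormalizedPerturbation.

Section Tolerances.
Variable C : numClosedFieldType.
Variable e : C.
Hypotheses (e_gt0 : 0 < e) (e_le1 : e <= 1).

Let m := 1 - e / 4.

Lemma quarter_lt1 : 0 <= e / 4 < 1.
Proof.
rewrite divr_ge0 ?ler0n ?(ltW e_gt0) //= ltr_pdivrMr ?ltr0n // mul1r.
by apply: le_lt_trans e_le1 _; rewrite ltr1n.
Qed.

Lemma band_factor_gt0 : 0 < m.
Proof. by rewrite subr_gt0; case/andP: quarter_lt1. Qed.

Lemma band_factor_lo : 1 - e <= m ^+ 2.
Proof.
rewrite -subr_ge0.
have -> : m ^+ 2 - (1 - e) = e / 2 + (e / 4) ^+ 2 by rewrite /m; field.
by rewrite addr_ge0 ?exprn_ge0 ?divr_ge0 ?(ltW e_gt0).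
Qed.

Lemma band_factor_hi : m^-1 ^+ 2 <= 1 + e.
Proof.
have m_gt0 := band_factor_gt0; have e_ge0 := ltW e_gt0.
rewrite exprVn -[X in X <= _]mul1r ler_pdivrMr ?exprn_gt0 // -subr_ge0.
have -> : (1 + e) * m ^+ 2 - 1 = e / 16 * (7 * (1 - e) + 1 + e ^+ 2)
  by rewrite /m; field.
rewrite mulr_ge0 ?divr_ge0 // addr_ge0 ?exprn_ge0 //.
by rewrite addr_ge0 ?mulr_ge0 ?subr_ge0 ?ler0n ?ler01.
Qed.

Lemma hfun_ratio_band (g l lb : C) : 0 < g ->
  l \is Num.real -> lb \is Num.real -> l != 0 -> `|lb - l| <= `|l| / 4 * e ->
  in_band m (hfun g lb / hfun g l).
Proof.
move=> g_gt0 l_real lb_real l_neq0 err.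
set q := lb / l; have lbE : lb = q * l by rewrite /q divfK.
have q_real : q \is Num.real by rewrite rpredM ?rpredV.
have q_band : in_band m q.
  apply: rel_error_band quarter_lt1 q_real _.
  have -> : q - 1 = (lb - l) / l by rewrite /q; field.
  rewrite normrM normfV ler_pdivrMr ?normr_gt0 //.
  by apply: le_trans err _; rewrite [e / 4 * _]mulrC mulrA mulrAC.
have L_ge0 : 0 <= l ^+ 2 by rewrite -realEsqr.
have -> : hfun g lb / hfun g l = q * (l ^+ 2 + g) / (q ^+ 2 * l ^+ 2 + g).
  have sg_gt0 : 0 < sqrtC g by rewrite sqrtC_gt0.
  have den_gt0 : 0 < q ^+ 2 * l ^+ 2 + g.
    by rewrite ltr_wpDl // mulr_ge0 // -realEsqr.
  rewrite /hfun lbE; field.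
  by rewrite exprMn (gt_eqF den_gt0) l_neq0 (gt_eqF sg_gt0) gt_eqF ?ltr_wpDl.
exact: ridge_gain_band band_factor_gt0 L_ge0 g_gt0 q_band.
Qed.

End Tolerances.

Section RidgeFilter.
Variable C : numClosedFieldType.

Lemma hfun_neq0 (g l : C) : 0 < g -> l \is Num.real -> l != 0 -> hfun g l != 0.
Proof.
move=> g_gt0 l_real l_neq0; rewrite /hfun !mulf_neq0 ?invr_eq0 //.
  by rewrite gt_eqF ?sqrtC_gt0.
by rewrite gt_eqF // ltr_wpDl // -realEsqr.
Qed.

Lemma ridge_direction N (F V : 'M[C]_N) (lam beta : 'I_N -> C) (g : C) :
  V \is unitarymx -> F = V *m diag_of lam *m V ^t* -> F ^t* = F ->
  (forall i, lam i \is Num.real) -> 0 < g ->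
  \sum_i (beta i * hfun g (lam i)) *: col i V =
  sqrtC g *: (invmx (F ^t* *m F + g%:M) *m F ^t* *m (V *m coords beta)).
Proof.
move=> V_unitary F_spec F_herm lam_real g_gt0.
rewrite (ridge_solution V_unitary beta F_spec F_herm) => [|i]; last first.
  by rewrite gt_eqF // ltr_wpDl // -realEsqr.
rewrite sum_colsE scalemxAr; congr (V *m _).
by apply/matrixP => i k; rewrite !mxE /hfun; ring.
Qed.

End RidgeFilter.

Theorem mainTheorem3 (C : numClosedFieldType) (N : nat)
  (F V : 'M[C]_N) (lam : 'I_N -> C) (gamma eps : C)
  (y : 'cV[C]_N) (beta : 'I_N -> C) (lamb : 'I_N -> C) :
  F \in unitmx ->
  F ^t* = F ->
  V \is unitarymx ->
  (forall i, lam i \is Num.real) ->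
  F = \sum_(i < N) lam i *: (col i V *m (col i V) ^t*) ->
  0 < gamma -> 0 < eps -> eps <= 1 ->
  vnorm y = 1 ->
  y = \sum_(i < N) beta i *: col i V ->
  (forall i, lamb i \is Num.real) ->
  (forall i, `|lamb i - lam i| <= specnorm lam / (4%:R * condnum lam) * eps) ->
  let u := \sum_(i < N) (beta i * hfun gamma (lamb i)) *: col i V in
  let us := \sum_(i < N) (beta i * hfun gamma (lam i)) *: col i V in
  let w := (vnorm u)^-1 *: u in
  let ws := (vnorm us)^-1 *: us in
  let z := invmx (F ^t* *m F + gamma%:M) *m F ^t* *m y in
  [/\ vnorm u != 0, vnorm us != 0, vnorm z != 0,
      ws = (vnorm z)^-1 *: z
    & vnorm (w - ws) <= eps].
Proof.
move=> F_unit F_herm V_unitary lam_real F_spec g_gt0 e_gt0 e_le1 y_unit y_coords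
  lamb_real lamb_err u us w ws z.
rewrite spectral_sumE in F_spec; rewrite sum_colsE in y_coords.
have lam_neq0 i : lam i != 0.
  by move: i; apply/(conj_diag_unitP V_unitary); rewrite -F_spec.
have beta_sumsq : sumsq beta = 1.
  by rewrite -[sumsq _]sqrtCK -vnorm_coords -(vnorm_unitary _ V_unitary)
    -y_coords y_unit expr1n.
pose b i := beta i * hfun gamma (lam i).
pose t i := hfun gamma (lamb i) / hfun gamma (lam i).
have b_gt0 : 0 < sumsq b.
  by apply: sumsq_mul_gt0 => [|i]; rewrite ?beta_sumsq ?oner_eq0 ?hfun_neq0.
have t_band i : in_band (1 - eps / 4) (t i).
  apply: hfun_ratio_band => //; apply: le_trans (lamb_err i) _.
  by apply: ler_wpM2r; [exact: ltW | exact: tolerance_le].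
have us_coords : us = V *m coords b by rewrite /us sum_colsE.
have u_coords : u = V *m coords (fun i => b i * t i).
  rewrite /u sum_colsE; congr (V *m _); apply/matrixP => i k; rewrite !mxE /b /t.
  by rewrite -mulrA [hfun _ (lam i) * _]mulrC divfK ?hfun_neq0.
have us_z : us = sqrtC gamma *: z.
  by rewrite /z y_coords -(ridge_direction _ V_unitary F_spec).
have us_neq0 : vnorm us != 0.
  by rewrite us_coords vnorm_unitary ?vnorm_coords // gt_eqF ?sqrtC_gt0.
split=> //.
- rewrite u_coords vnorm_unitary ?vnorm_coords // gt_eqF // sqrtC_gt0.
  exact: sumsq_band_gt0 (band_factor_gt0 e_gt0 e_le1) t_band b_gt0.
- by apply: contra us_neq0; rewrite us_z vnormZ => /eqP ->; rewrite mulr0.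
- by rewrite -[ws]/(normalize us) us_z normalizeZ ?sqrtC_gt0.
rewrite -[w]/(normalize u) -[ws]/(normalize us) u_coords us_coords.
rewrite !normalize_unitary // -mulmxBr vnorm_unitary //.
apply: normalized_perturbation (ltW e_gt0) _ _ b_gt0 t_band.
- exact: band_factor_gt0.
- exact: band_factor_lo.
- exact: band_factor_hi.
Qed.
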